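(* Let $I=(N,O,\succsim)$ be a general instance. If a generalized random matching $p$ is non-wasteful, then in each of its decompositions all generalized deterministic matchings are non-wasteful.
   Context: $N$ is a finite set of $n$ agents and $O$ a finite set of $m$ objects ($m,n$ arbitrary); $\emptyset$ is the null object. Each agent $i$ has a weak order $\succsim_i$ over $O\cup\{\emptyset\}$ and each object $o$ a weak order $\succsim_o$ over $N\cup\{\emptyset\}$, with no object indifferent to $\emptyset$ for any agent and vice versa. $(i,o)$ is an acceptable pair if $o\succ_i\emptyset$ and $i\succ_o\emptyset$. A generalized random matching is an $n\times m$ matrix $p$ with $p(i,o)\ge0$, row sums $\le1$ and column sums $\le1$; it is deterministic if its entries are in $\{0,1\}$. A decomposition of $p$ is a representation $p=\sum_{j=1}^k\lambda_jP_j$ with $P_j$ generalized deterministic matchings, $\lambda_j\in(0,1]$, $\sum_j\lambda_j=1$. $p$ is non-wasteful if there is no acceptable pair $(i,o)$ with $\sum_{o':o'\succsim_i o}p(i,o')<1$ and $\sum_{j\in N}p(j,o)<1$. *)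

From mathcomp Require Import all_boot all_order all_algebra.
Set Implicit Arguments. Unset Strict Implicit. Unset Printing Implicit Defensive.
Import Order.TTheory GRing.Theory Num.Theory.
Local Open Scope ring_scope.

(* Agents N and objects O are finite types; [None] plays the role of the
   null object / null agent. A weak order is a total, transitive relation. *)
Definition weak_order (T : Type) (r : rel T) : Prop := total r /\ transitive r.

Definition general_instance (N O : finType)
  (prefA : N -> rel (option O)) (prefO : O -> rel (option N)) : Prop :=
  (forall i, weak_order (prefA i)) /\ (forall o, weak_order (prefO o)) /\
  (forall i o, ~~ (prefA i (Some o) None && prefA i None (Some o))) /\
  (forall o i, ~~ (prefO o (Some i) None && prefO o None (Some i))).

Definition strict (T : Type) (r : rel T) (x y : T) : bool := r x y && ~~ r y x.

Definition acceptable (N O : finType)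
  (prefA : N -> rel (option O)) (prefO : O -> rel (option N)) (i : N) (o : O) : bool :=
  strict (prefA i) (Some o) None && strict (prefO o) (Some i) None.

Definition gen_random_matching (R : realFieldType) (N O : finType)
  (p : N -> O -> R) : Prop :=
  (forall i o, 0 <= p i o) /\
  (forall i, \sum_(o : O) p i o <= 1) /\
  (forall o, \sum_(i : N) p i o <= 1).

Definition gen_deterministic_matching (R : realFieldType) (N O : finType)
  (P : N -> O -> R) : Prop :=
  gen_random_matching P /\ (forall i o, P i o = 0 \/ P i o = 1).

Definition decomposition (R : realFieldType) (N O : finType)
  (p : N -> O -> R) (k : nat) (lam : 'I_k -> R) (P : 'I_k -> N -> O -> R) : Prop :=
  (forall j, gen_deterministic_matching (P j)) /\
  (forall j, 0 < lam j <= 1) /\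
  \sum_(j < k) lam j = 1 /\
  (forall i o, p i o = \sum_(j < k) lam j * P j i o).

Definition non_wasteful (R : realFieldType) (N O : finType)
  (prefA : N -> rel (option O)) (prefO : O -> rel (option N))
  (p : N -> O -> R) : Prop :=
  ~ exists (i : N) (o : O),
      [/\ acceptable prefA prefO i o,
          \sum_(o' : O | prefA i (Some o') (Some o)) p i o' < 1 &
          \sum_(j : N) p j o < 1].

From mathcomp Require Import all_boot all_order all_algebra.
Import Order.TTheory GRing.Theory Num.Theory.
Local Open Scope ring_scope.

(* Both sums in the definition of waste (an agent's mass on objects weakly
   preferred to o, and the mass of o) are linear in the matching. Along a
   decomposition p = \sum_l lam_l P_l they are therefore positive convex
   combinations of the corresponding sums for the P_l, each of which is at
   most 1. If such a sum is below 1 for one P_j, it is below 1 for p as well. *)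

Lemma convex_comb_lt1 (R : numDomainType) (k : nat) (lam S : 'I_k -> R)
    (j : 'I_k) :
  (forall l, 0 < lam l) -> \sum_(l < k) lam l = 1 ->
  (forall l, S l <= 1) -> S j < 1 -> \sum_(l < k) lam l * S l < 1.
Proof.
move=> lam_gt0 lam_sum1 S_le1 Sj_lt1; rewrite -subr_lt0.
have -> : \sum_(l < k) lam l * S l - 1 = \sum_(l < k) lam l * (S l - 1).
  by rewrite -{1}lam_sum1 -sumrB; apply: eq_bigr => l _; rewrite mulrBr mulr1.
rewrite (bigD1 j) //=.
have term_j_lt0 : lam j * (S j - 1) < 0 by rewrite pmulr_rlt0 ?subr_lt0.
have rest_le0 : \sum_(l < k | l != j) lam l * (S l - 1) <= 0.
  by apply: sumr_le0 => l _; rewrite pmulr_rle0 ?subr_le0.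
by have := ltr_leD term_j_lt0 rest_le0; rewrite addr0.
Qed.

Lemma ler_sum_pred (R : numDomainType) (T : finType) (c : pred T)
    (f : T -> R) :
  (forall x, 0 <= f x) -> \sum_(x | c x) f x <= \sum_x f x.
Proof. by move=> f_ge0; rewrite [leRHS](bigID c) /= lerDl sumr_ge0. Qed.

Lemma gen_random_matching_row_le1 (R : realFieldType) (N O : finType)
    (p : N -> O -> R) (i : N) (c : pred O) :
  gen_random_matching p -> \sum_(o | c o) p i o <= 1.
Proof.
case=> p_ge0 [row_le1 _].
by apply: le_trans (row_le1 i); apply: ler_sum_pred.
Qed.

Section Decomposition.

Context {R : realFieldType} {N O : finType} {p : N -> O -> R}.
Context {k : nat} {lam : 'I_k -> R} {P : 'I_k -> N -> O -> R}.
Hypothesis dec : decomposition p lam P.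

Lemma decomposition_sumE {T : finType} (c : pred T) (a : T -> N) (b : T -> O) :
  \sum_(x | c x) p (a x) (b x) =
  \sum_(l < k) lam l * \sum_(x | c x) P l (a x) (b x).
Proof.
have [_ [_ [_ pE]]] := dec.
under eq_bigr => x _ do rewrite pE.
by rewrite exchange_big; apply: eq_bigr => l _; rewrite mulr_sumr.
Qed.

Lemma decomposition_sum_lt1 {T : finType} {c : pred T} (a : T -> N)
    (b : T -> O) {j : 'I_k} :
  (forall l, \sum_(x | c x) P l (a x) (b x) <= 1) ->
  \sum_(x | c x) P j (a x) (b x) < 1 ->
  \sum_(x | c x) p (a x) (b x) < 1.
Proof.
have [_ [lam_range [lam_sum1 _]]] := dec.
move=> S_le1 Sj_lt1; rewrite decomposition_sumE.
apply: convex_comb_lt1 Sj_lt1 => // l.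
by case/andP: (lam_range l).
Qed.

End Decomposition.

Theorem lemma6 (R : realFieldType) (N O : finType)
  (prefA : N -> rel (option O)) (prefO : O -> rel (option N))
  (p : N -> O -> R) :
  general_instance prefA prefO ->
  gen_random_matching p ->
  non_wasteful prefA prefO p ->
  forall (k : nat) (lam : 'I_k -> R) (P : 'I_k -> N -> O -> R),
    decomposition p lam P ->
    forall j : 'I_k, non_wasteful prefA prefO (P j).
Proof.
move=> _ _ p_nw k lam P dec j [i [o [acc row_lt1 col_lt1]]].
have P_matching l : gen_random_matching (P l) by have [/(_ l) []] := dec.
apply: p_nw; exists i, o; split => //.
- apply: (decomposition_sum_lt1 dec (fun=> i) id _ row_lt1) => l.
  exact: gen_random_matching_row_le1.
- apply: (decomposition_sum_lt1 dec id (fun=> o) _ col_lt1) => l.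
  by have [_ [_]] := P_matching l.
Qed.
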